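(* Let $K$ be the division subring of $S=\mathbb{C}[[t,Q]][t^{-1},Q^{-1}]$ generated by $R=\mathbb{C}\langle t,Q,Q^{-1}\rangle/(Qt-qtQ)$, with the qsi structure ($\sigma,\theta^{*}$) extended from $R$. Then the ring of qsi constants of $K$, i.e. $\{f\in K:\sigma(f)=f,\ \theta^{(m)}(f)=0\ \forall m\ge1\}$, equals $\mathbb{C}$.
   Context: $q\in\mathbb{C}$, $q\neq0,1$, not a root of unity; $[m]_q=1+\dots+q^{m-1}$, $[m]_q!=[1]_q\cdots[m]_q$. $S$ is the ring of skew formal Laurent series in $t,Q$ with $Qt=qtQ$; every nonzero element of $S$ is invertible. On $S$ (and $R\subset S$), $\sigma$ is the continuous $\mathbb{C}$-algebra automorphism with $\sigma(t)=qt$, $\sigma(Q)=qQ$, and $\theta^{(1)}$ is the continuous $\mathbb{C}$-linear map with $\theta^{(1)}(t^iQ^j)=[i]_qt^{i-1}Q^j$ (so $\theta^{(1)}(t)=1$, $\theta^{(1)}(Q)=0$, and $\theta^{(1)}(ab)=\theta^{(1)}(a)b+\sigma(a)\theta^{(1)}(b)$); $\theta^{(m)}=\frac{1}{[m]_q!}(\theta^{(1)})^m$. $K$ is stable under these operators. *)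

From HB Require Import structures.
From mathcomp Require Import all_boot all_order all_algebra.
Set Implicit Arguments. Unset Strict Implicit. Unset Printing Implicit Defensive.
Import Order.TTheory GRing.Theory Num.Theory.
Local Open Scope ring_scope.

(* The field of complex numbers is modelled by an arbitrary
   numClosedFieldType C (C itself is one; the statement is thus more general).
   A formal series  sum_{i,j} f i j t^i Q^j  is represented by its coefficient
   function  f : int -> int -> C  (f i j = coefficient of t^i Q^j).        *)
Definition series (C : numClosedFieldType) := int -> int -> C.

(* Support condition of S = C((t))((Q; sigma)) : the Q-exponents are bounded
   below, and for each Q-exponent the t-exponents are bounded below.        *)
Definition isS (C : numClosedFieldType) (f : series C) : Prop :=
  (exists J : int, forall i j, j < J -> f i j = 0) /\
  (forall j, exists I : int, forall i, i < I -> f i j = 0).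

(* R = C<t,Q,Q^-1>/(Qt - qtQ), embedded in S: finite sums of c t^i Q^j with
   i >= 0, j in Z.                                                          *)
Definition inR (C : numClosedFieldType) (f : series C) : Prop :=
  exists N : nat, forall i j, f i j != 0 ->
    (0 <= i <= N%:Z) /\ (- N%:Z <= j <= N%:Z).

Definition zeroS (C : numClosedFieldType) : series C := fun _ _ => 0.
Definition constS (C : numClosedFieldType) (c : C) : series C :=
  fun i j => if (i == 0) && (j == 0) then c else 0.
Definition oneS (C : numClosedFieldType) : series C := constS 1.
Definition addS (C : numClosedFieldType) (a b : series C) : series C :=
  fun i j => a i j + b i j.
Definition oppS (C : numClosedFieldType) (a : series C) : series C :=
  fun i j => - a i j.

(* Multiplication, with  t^i Q^j * t^k Q^l = q^(j k) t^(i+k) Q^(j+l).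
   [mulS q a b c] means c = a * b: every coefficient of c is the (finite)
   sum over all (i,j) of a_(i,j) b_(m-i,n-j) q^(j (m-i)).                  *)
Definition mulS (C : numClosedFieldType) (q : C) (a b c : series C) : Prop :=
  forall m n : int, exists s : seq (int * int),
    uniq s /\
    (forall i j, a i j * b (m - i) (n - j) != 0 -> (i, j) \in s) /\
    c m n = \sum_(p <- s) a p.1 p.2 * b (m - p.1) (n - p.2) * q ^ (p.2 * (m - p.1)).

Definition divSubring (C : numClosedFieldType) (q : C) (P : series C -> Prop) : Prop :=
  (forall x, P x -> isS x) /\
  P (zeroS C) /\ P (oneS C) /\
  (forall a b, P a -> P b -> P (addS a b)) /\
  (forall a, P a -> P (oppS a)) /\
  (forall a b c, P a -> P b -> isS c -> mulS q a b c -> P c) /\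
  (forall a b, P a -> a <> zeroS C -> isS b -> mulS q a b (oneS C) -> P b).

Definition inK (C : numClosedFieldType) (q : C) (f : series C) : Prop :=
  forall P, divSubring q P -> (forall r, inR r -> P r) -> P f.

Definition sigmaS (C : numClosedFieldType) (q : C) (f : series C) : series C :=
  fun i j => q ^ (i + j) * f i j.

Definition qint (C : numClosedFieldType) (q : C) (i : int) : C :=
  (q ^ i - 1) / (q - 1).

Definition qnat (C : numClosedFieldType) (q : C) (m : nat) : C :=
  \sum_(k < m) q ^+ k.
Definition qfact (C : numClosedFieldType) (q : C) (m : nat) : C :=
  \prod_(1 <= k < m.+1) qnat q k.

(* theta^(1)(t^i Q^j) = [i]_q t^(i-1) Q^j, i.e. coefficient of t^i Q^j in
   theta^(1) f is [i+1]_q * f (i+1) j. *)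
Definition theta1 (C : numClosedFieldType) (q : C) (f : series C) : series C :=
  fun i j => qint q (i + 1) * f (i + 1) j.

Definition thetaS (C : numClosedFieldType) (q : C) (m : nat) (f : series C) : series C :=
  fun i j => (qfact q m)^-1 * iter m (theta1 q) f i j.

From HB Require Import structures.
From mathcomp Require Import all_boot all_order all_algebra.
From Stdlib Require Import FunctionalExtensionality.
Set Implicit Arguments. Unset Strict Implicit. Unset Printing Implicit Defensive.
Import Order.TTheory GRing.Theory Num.Theory.
Local Open Scope ring_scope.

(* Proof strategy.  sigma scales each monomial, sigma(t^i Q^j) =
   q^(i+j) t^i Q^j, and theta^(1) shifts it, theta^(1)(t^i Q^j) =
   [i]_q t^(i-1) Q^j.  Hence if f is a qsi constant and its coefficient
   f_(i,j) is nonzero, then q^(i+j) = 1 (from sigma f = f) and [i]_q = 0,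
   i.e. q^i = 1 (from theta^(1) f = 0).  Since q is not a root of unity, an
   integer power of q equals 1 only for the exponent 0, so i = j = 0 and f is
   a constant; this direction holds for every series, not only those in K.
   Conversely a constant c lies in R, hence in K, is fixed by sigma (its
   exponent i+j is 0) and is killed by theta^(1) ([0]_q = 0), hence by every
   theta^(m) = (theta^(1))^m / [m]_q!, m >= 1. *)

Section QNumbers.
Variables (F : fieldType) (q : F).
Hypothesis q_not_root : forall n : nat, (0 < n)%N -> q ^+ n != 1.

Lemma expz_eq1 (z : int) : q ^ z = 1 -> z = 0.
Proof.
case: z => [[|n]|n] // qz1; have /eqP[] := @q_not_root n.+1 isT.
- by rewrite -exprnP in qz1.
- move: qz1; rewrite NegzE -invr_expz -exprnP => /(congr1 GRing.inv).
  by rewrite invrK invr1.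
Qed.

End QNumbers.

Section SeriesOperators.
Variables (C : numClosedFieldType) (q : C).

Lemma series_ext (f g : series C) : (forall i j, f i j = g i j) -> f = g.
Proof.
by move=> fg; apply: functional_extensionality => i;
  apply: functional_extensionality => j; exact: fg.
Qed.

Lemma theta1_coef (f : series C) (i j : int) :
  theta1 q f (i - 1) j = qint q i * f i j.
Proof. by rewrite /theta1 subrK. Qed.

Lemma thetaS1 (f : series C) : thetaS q 1 f = theta1 q f.
Proof.
apply: series_ext => i j.
by rewrite /thetaS /qfact /qnat big_nat1 big_ord1 expr0 invr1 mul1r.
Qed.

Lemma thetaS_eq0 (f : series C) (m : nat) :
  (1 <= m)%N -> theta1 q f = zeroS C -> thetaS q m f = zeroS C.
Proof.
have theta1_zero : theta1 q (zeroS C) = zeroS C.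
  by apply: series_ext => i j; rewrite /theta1 /zeroS mulr0.
move=> m_gt0 theta1f; have iter0 : iter m (theta1 q) f = zeroS C.
  case: m m_gt0 => // m _; elim: m => [|m IH] //=.
  by rewrite -/(iter m.+1 _ _) IH theta1_zero.
by apply: series_ext => i j; rewrite /thetaS iter0 /zeroS mulr0.
Qed.

Lemma sigmaS_const (c : C) : sigmaS q (constS c) = constS c.
Proof.
apply: series_ext => i j; rewrite /sigmaS /constS.
by case: ifP => [/andP[/eqP-> /eqP->]|_]; rewrite ?addr0 ?expr0z ?mul1r ?mulr0.
Qed.

Lemma theta1_const (c : C) : theta1 q (constS c) = zeroS C.
Proof.
apply: series_ext => i j; rewrite /theta1 /zeroS /constS.
case: ifP => [/andP[/eqP-> _]|_]; last by rewrite mulr0.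
by rewrite /qint expr0z subrr !mul0r.
Qed.

Lemma inR_inK (f : series C) : inR f -> inK q f.
Proof. by move=> Rf P _ RinP; exact: RinP. Qed.

Lemma inR_const (c : C) : inR (constS c).
Proof.
exists 0%N => i j; rewrite /constS.
by case: ifP => [/andP[/eqP-> /eqP->] _|]; rewrite ?eqxx.
Qed.

Hypothesis q_neq1 : q != 1.
Hypothesis q_not_root : forall n : nat, (0 < n)%N -> q ^+ n != 1.

Lemma qint_eq0 (i : int) : qint q i = 0 -> q ^ i = 1.
Proof.
move=> /eqP; rewrite /qint mulf_eq0 invr_eq0 !subr_eq0 (negbTE q_neq1).
by rewrite orbF => /eqP.
Qed.

Lemma qsi_constant_support (f : series C) (i j : int) :
  sigmaS q f = f -> theta1 q f = zeroS C -> f i j != 0 -> (i == 0) && (j == 0).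
Proof.
move=> sigmaf theta1f fij_neq0.
have qij1 : q ^ (i + j) = 1.
  apply: (mulIf fij_neq0); rewrite mul1r.
  exact: (congr1 (fun g => g i j) sigmaf).
have qi1 : q ^ i = 1.
  apply: qint_eq0; apply: (mulIf fij_neq0); rewrite mul0r.
  by rewrite -theta1_coef theta1f.
have i0 := expz_eq1 q_not_root qi1.
move: qij1; rewrite i0 add0r => /(expz_eq1 q_not_root) ->.
by rewrite eqxx.
Qed.

Lemma qsi_constant_eq_const (f : series C) :
  sigmaS q f = f -> theta1 q f = zeroS C -> f = constS (f 0 0).
Proof.
move=> sigmaf theta1f; apply: series_ext => i j; rewrite /constS.
case: ifP => [/andP[/eqP-> /eqP->] //|not00].
apply/eqP; apply: contraFT not00; exact: qsi_constant_support.
Qed.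

End SeriesOperators.

Theorem mainTheorem5 (C : numClosedFieldType) (q : C)
  (hq0 : q != 0) (hq1 : q != 1) (hqroot : forall n : nat, (0 < n)%N -> q ^+ n != 1) :
  forall f : series C,
    (inK q f /\ sigmaS q f = f /\ (forall m : nat, (1 <= m)%N -> thetaS q m f = zeroS C))
    <-> (exists c : C, f = constS c).
Proof.
move=> f; split.
  move=> [_ [sigmaf thetaf]]; exists (f 0 0).
  apply: (qsi_constant_eq_const hq1 hqroot sigmaf).
  by rewrite -thetaS1; exact: thetaf.
move=> [c ->]; split; [|split].
- by apply: inR_inK; exact: inR_const.
- exact: sigmaS_const.
- by move=> m m_gt0; apply: thetaS_eq0 m_gt0 (theta1_const q c).
Qed.
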